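(* Assume the setting below, with $\inf H>0$. Define $\tilde\tau:Y\to\mathbb Z^+$ by $\tilde\tau|_{Y_j}=\big[\|1_{Y_j}H\|_\theta\big]+1$ (integer part), where $\|1_{Y_j}H\|_\theta=\sup_{Y_j}|H|+\sup_{y\ne y'\in Y_j}|H(y)-H(y')|/d_\theta(y,y')$, and on $\Delta=\{(y,\ell)\in Y\times\mathbb Z:0\le\ell\le\tilde\tau(y)-1\}$ define $\tilde h(y,\ell)=H(y)/\tilde\tau(y)$. Then: (a) $H(y)=\sum_{\ell=0}^{\tilde\tau(y)-1}\tilde h(y,\ell)$ for all $y\in Y$; (b) $0<\inf\tilde h\le|\tilde h|_\infty\le1$ and $|\tilde h(y,\ell)-\tilde h(y',\ell)|\le d_\theta(y,y')$ for all $y,y'\in Y_j$, $j\ge1$, $0\le\ell\le\tilde\tau(y)-1$.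
   Context: Let $Y$ be a set with an at most countable partition $\{Y_j\}$ and a map $F:Y\to Y$; the separation time $s(y,y')$ is the least $n\ge0$ with $F^ny,F^ny'$ in distinct $Y_j$, and $d_\theta(y,y')=\theta^{s(y,y')}$ for a fixed $\theta\in(0,1)$. Let $H:Y\to(0,\infty)$ (the induced roof function of a nonuniformly expanding semiflow) satisfy: there is $C\ge1$ such that for all $j$, $\sup_{y\ne y'\in Y_j}|H(y)-H(y')|/d_\theta(y,y')\le C\inf_{Y_j}H$ (in particular $H$ is piecewise $d_\theta$-Lipschitz). *)

From HB Require Import structures.
From mathcomp Require Import all_boot all_order all_algebra.
From mathcomp Require Import all_classical all_reals.
Set Implicit Arguments. Unset Strict Implicit. Unset Printing Implicit Defensive.
Import Order.TTheory GRing.Theory Num.Theory.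
Local Open Scope classical_set_scope.
Local Open Scope ring_scope.

(* The partition {Y_j} of Y is encoded by an index map idx : Y -> nat,
   Y_j = [set y | idx y = j]  (an at most countable partition). *)
Definition piece (Y : Type) (idx : Y -> nat) (j : nat) : set Y := [set y | idx y = j].

Definition separated (Y : Type) (idx : Y -> nat) (F : Y -> Y) (y y' : Y) (n : nat) : Prop :=
  idx (iter n F y) <> idx (iter n F y').

Definition sep_time (Y : Type) (idx : Y -> nat) (F : Y -> Y) (y y' : Y) : nat :=
  xget 0%N [set n | separated idx F y y' n /\
                    (forall m, (m < n)%N -> ~ separated idx F y y' m)].

(* d_theta(y,y') = theta^{s(y,y')}, with the convention theta^oo = 0 when
   the orbits are never separated. *)
Definition dtheta (R : realType) (Y : Type) (idx : Y -> nat) (F : Y -> Y)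
  (theta : R) (y y' : Y) : R :=
  if `[< exists n, separated idx F y y' n >] then theta ^+ sep_time idx F y y' else 0.

Definition normtheta (R : realType) (Y : Type) (idx : Y -> nat) (F : Y -> Y)
  (theta : R) (H : Y -> R) (j : nat) : R :=
  sup [set `|H y| | y in piece idx j] +
  sup [set `|H p.1 - H p.2| / dtheta idx F theta p.1 p.2 |
        p in [set p : Y * Y | idx p.1 = j /\ idx p.2 = j /\ p.1 <> p.2]].

Definition ttau (R : realType) (Y : Type) (idx : Y -> nat) (F : Y -> Y)
  (theta : R) (H : Y -> R) (y : Y) : nat :=
  (Num.truncn (normtheta idx F theta H (idx y))).+1.

Definition Delta (R : realType) (Y : Type) (idx : Y -> nat) (F : Y -> Y)
  (theta : R) (H : Y -> R) : set (Y * nat) :=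
  [set p | (p.2 < ttau idx F theta H p.1)%N].

Definition htilde (R : realType) (Y : Type) (idx : Y -> nat) (F : Y -> Y)
  (theta : R) (H : Y -> R) (y : Y) (l : nat) : R :=
  H y / (ttau idx F theta H y)%:R.

From HB Require Import structures.
From mathcomp Require Import all_boot all_order all_algebra.
From mathcomp Require Import all_classical all_reals.
From mathcomp Require Import lra.
Set Implicit Arguments. Unset Strict Implicit. Unset Printing Implicit Defensive.
Import Order.TTheory GRing.Theory Num.Theory.
Local Open Scope classical_set_scope.
Local Open Scope ring_scope.

(* Since d_theta <= 1, the hypothesis bounds the oscillation of H on Y_j by
   C inf_{Y_j} H <= C H(y); hence H(y) <= ||1_{Y_j} H||_theta <= (1 + 2C) H(y),
   and tau(y) lies between H(y) and (1 + 2C) H(y) + 1. This makes h = H / tau at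
   most 1 and at least inf H / ((1 + 2C) inf H + 1), as x / ((1 + 2C) x + 1) is
   increasing. The Lipschitz seminorm of H on Y_j is at most
   ||1_{Y_j} H||_theta < tau, and tau is constant on Y_j, so dividing by tau makes
   h 1-Lipschitz for d_theta. *)

Lemma dtheta_ge0 (R : realType) (Y : Type) (idx : Y -> nat) (F : Y -> Y)
    (theta : R) (y y' : Y) :
  0 <= theta -> 0 <= dtheta idx F theta y y'.
Proof. by move=> theta_ge0; rewrite /dtheta; case: ifP => _ //; exact: exprn_ge0. Qed.

Lemma dtheta_le1 (R : realType) (Y : Type) (idx : Y -> nat) (F : Y -> Y)
    (theta : R) (y y' : Y) :
  0 <= theta <= 1 -> dtheta idx F theta y y' <= 1.
Proof.
by case/andP=> theta_ge0 theta_le1; rewrite /dtheta; case: ifP => _ //; exact: exprn_ile1.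
Qed.

Lemma sum_htilde (R : realType) (Y : Type) (idx : Y -> nat) (F : Y -> Y)
    (theta : R) (H : Y -> R) (y : Y) :
  H y = \sum_(0 <= l < ttau idx F theta H y) htilde idx F theta H y l.
Proof. by rewrite sumr_const_nat subn0 /htilde -[RHS]mulr_natr divfK // pnatr_eq0. Qed.

Lemma inf_image_ge0 (R : realType) (T : Type) (f : T -> R) (A : set T) :
  A !=set0 -> (forall x, 0 <= f x) -> 0 <= inf (f @` A).
Proof. by move=> [x Ax] f_ge0; apply: lb_le_inf => [|_ [z _ <-]//]; exists (f x), x. Qed.

Lemma inf_image_le (R : realType) (T : Type) (f : T -> R) (A : set T) (x : T) :
  (forall x, 0 <= f x) -> A x -> inf (f @` A) <= f x.
Proof. by move=> f_ge0 Ax; apply: ge_inf; [exists 0 => _ [z _ <-] | exists x]. Qed.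

Lemma ler_ratio_affine (R : realFieldType) (a x y : R) :
  0 <= a -> 0 <= x <= y -> x / (a * x + 1) <= y / (a * y + 1).
Proof.
move=> a_ge0 /andP[x_ge0 le_xy].
have ax_gt0 : 0 < a * x + 1 by have := mulr_ge0 a_ge0 x_ge0; lra.
have ay_gt0 : 0 < a * y + 1 by have := mulr_ge0 a_ge0 (le_trans x_ge0 le_xy); lra.
rewrite ler_pdivrMr // mulrAC ler_pdivlMr //; nra.
Qed.

Section InducedRoof.

Variables (R : realType) (Y : Type) (idx : Y -> nat) (F : Y -> Y)
  (theta : R) (H : Y -> R) (C : R).

Hypothesis theta01 : 0 <= theta <= 1.
Hypothesis H_gt0 : forall y, 0 < H y.
Hypothesis C_ge0 : 0 <= C.
Hypothesis H_lip : forall y y', idx y = idx y' -> y <> y' ->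
  `|H y - H y'| <= C * inf [set H z | z in piece idx (idx y)] * dtheta idx F theta y y'.

Local Notation d := (dtheta idx F theta).
Local Notation infH j := (inf [set H z | z in piece idx j]).
Local Notation supH j := (sup [set `|H y| | y in piece idx j]).
Local Notation lipH j := (sup [set `|H p.1 - H p.2| / d p.1 p.2 |
  p in [set p : Y * Y | idx p.1 = j /\ idx p.2 = j /\ p.1 <> p.2]]).
Local Notation tau := (ttau idx F theta H).
Local Notation h := (htilde idx F theta H).

Let d_ge0 y y' : 0 <= d y y'.
Proof. by apply: dtheta_ge0; case/andP: theta01. Qed.

Let H_ge0 y : 0 <= H y. Proof. exact: ltW. Qed.

Let infH_ge0 y : 0 <= infH (idx y).
Proof. by apply: inf_image_ge0; first by exists y. Qed.

Let infH_le y : infH (idx y) <= H y.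
Proof. exact: inf_image_le. Qed.

Lemma H_lip_piece y y' : idx y = idx y' ->
  `|H y - H y'| <= C * infH (idx y) * d y y'.
Proof.
move=> same_piece; have [<-|neq_yy'] := pselect (y = y'); last exact: H_lip.
by rewrite subrr normr0 !mulr_ge0 // infH_ge0.
Qed.

Lemma H_osc_le y y' : idx y = idx y' -> `|H y - H y'| <= C * H y.
Proof.
move=> same_piece; apply: le_trans (H_lip_piece same_piece) _.
rewrite -[leRHS]mulr1 ler_pM ?mulr_ge0 ?infH_ge0 ?ler_wpM2l ?infH_le //.
exact: dtheta_le1.
Qed.

Lemma supH_bounds y : H y <= supH (idx y) <= (1 + C) * H y.
Proof.
have ub : ubound [set `|H z| | z in piece idx (idx y)] ((1 + C) * H y).
  move=> _ [z same_piece <-]; have := H_osc_le (esym same_piece).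
  by rewrite (gtr0_norm (H_gt0 z)) => /ler_normlP[]; lra.
apply/andP; split; last by apply: ge_sup => //; exists `|H y|, y.
rewrite -[H y]gtr0_norm //; apply: sup_upper_bound; last by exists y.
by split; [exists `|H y|, y | exists ((1 + C) * H y)].
Qed.

Lemma lip_quotient_le y a b : idx a = idx y -> idx b = idx y ->
  `|H a - H b| / d a b <= C * H y.
Proof.
move=> ea eb; have [->|d_neq0] := eqVneq (d a b) 0.
  by rewrite invr0 mulr0 mulr_ge0.
rewrite ler_pdivrMr ?lt_def ?d_neq0 ?d_ge0 //.
apply: le_trans (@H_lip_piece a b _) _; first by rewrite ea eb.
by rewrite ea ler_wpM2r // ler_wpM2l // infH_le.
Qed.

Lemma lipH_bounds y : 0 <= lipH (idx y) <= C * H y.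
Proof.
set A := [set _ | _ in _].
have ub : ubound A (C * H y) by move=> _ [[a b] /= [ea [eb _]] <-]; exact: lip_quotient_le.
have [->|/set0P[x Ax]] := eqVneq A set0; first by rewrite sup0 lexx mulr_ge0.
apply/andP; split; last by apply: ge_sup => //; exists x.
have x_ge0 : 0 <= x by case: Ax => p _ <-; rewrite divr_ge0.
by apply: le_trans x_ge0 (sup_upper_bound _ Ax); split; [exists x | exists (C * H y)].
Qed.

Lemma H_diff_le_lipH y y' : idx y = idx y' -> `|H y - H y'| <= lipH (idx y) * d y y'.
Proof.
move=> same_piece; have [<-|neq_yy'] := pselect (y = y').
  by rewrite subrr normr0 mulr_ge0 //; case/andP: (lipH_bounds y).
have [d0|d_neq0] := eqVneq (d y y') 0.
  by apply: le_trans (H_lip_piece same_piece) _; rewrite d0 !mulr0.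
rewrite -ler_pdivrMr ?lt_def ?d_neq0 ?d_ge0 //; apply: sup_upper_bound; last by exists (y, y').
split; first by exists (`|H y - H y'| / d y y'), (y, y').
exists (C * H y) => _ [[a b] /= [ea [eb _]] <-].
by apply: lip_quotient_le; rewrite ?ea ?eb.
Qed.

Lemma normtheta_bounds y :
  H y <= normtheta idx F theta H (idx y) <= (1 + 2 * C) * H y.
Proof.
rewrite /normtheta; have /andP[supH_ge supH_le] := supH_bounds y.
have /andP[lipH_ge0 lipH_le] := lipH_bounds y.
apply/andP; split; lra.
Qed.

Lemma ttau_gt y : normtheta idx F theta H (idx y) < (tau y)%:R.
Proof. exact: truncnS_gt. Qed.

Lemma ttau_le y : (tau y)%:R <= (1 + 2 * C) * H y + 1.
Proof.
have /andP[N_ge N_le] := normtheta_bounds y.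
rewrite /ttau -natr1 lerD2r; apply: le_trans N_le.
by rewrite truncn_le (le_trans (ltW (H_gt0 y))).
Qed.

Lemma lipH_lt_ttau y : lipH (idx y) < (tau y)%:R.
Proof.
apply: le_lt_trans (ttau_gt y); rewrite /normtheta lerDr.
by case/andP: (supH_bounds y) => H_le _; exact: le_trans H_le.
Qed.

Lemma htilde_gt0 y l : 0 < h y l.
Proof. by rewrite /htilde divr_gt0 // ltr0n. Qed.

Lemma htilde_le1 y l : `|h y l| <= 1.
Proof.
rewrite gtr0_norm ?htilde_gt0 // /htilde ler_pdivrMr ?ltr0n // mul1r.
by apply: ltW; apply: le_lt_trans (ttau_gt y); case/andP: (normtheta_bounds y).
Qed.

Lemma htilde_ge y l :
  inf (range H) / ((1 + 2 * C) * inf (range H) + 1) <= h y l.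
Proof.
have inf_ge0 : 0 <= inf (range H) by apply: inf_image_ge0; first by exists y.
have inf_le : inf (range H) <= H y by exact: inf_image_le.
have two_C_ge0 : 0 <= 1 + 2 * C by rewrite addr_ge0 ?mulr_ge0.
apply: le_trans (@ler_ratio_affine _ _ _ (H y) two_C_ge0 _) _; first by rewrite inf_ge0.
rewrite /htilde ler_pdivrMr; last by have := mulr_ge0 two_C_ge0 (ltW (H_gt0 y)); lra.
rewrite mulrAC ler_pdivlMr ?ltr0n // ler_wpM2l ?ttau_le //; exact: ltW.
Qed.

Lemma htilde_lip y y' l : idx y = idx y' -> `|h y l - h y' l| <= d y y'.
Proof.
move=> same_piece; have same_tau : tau y' = tau y by rewrite /ttau same_piece.
rewrite /htilde same_tau -mulrBl normrM normfV normr_nat.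
rewrite ler_pdivrMr ?ltr0n //; apply: le_trans (H_diff_le_lipH same_piece) _.
by rewrite mulrC ler_wpM2l // ltW ?lipH_lt_ttau.
Qed.

End InducedRoof.

Theorem lemma3p1 (R : realType) (Y : Type) (idx : Y -> nat) (F : Y -> Y)
  (theta : R) (H : Y -> R) (C : R) :
  0 < theta < 1 ->
  (forall y, 0 < H y) ->
  1 <= C ->
  (forall y y', idx y = idx y' -> y <> y' ->
     `|H y - H y'| <= C * inf [set H z | z in piece idx (idx y)] * dtheta idx F theta y y') ->
  0 < inf (range H) ->
  (* (a) *)
  (forall y, H y = \sum_(0 <= l < ttau idx F theta H y) htilde idx F theta H y l) /\
  (* (b) *)
  (0 < inf [set htilde idx F theta H p.1 p.2 | p in Delta idx F theta H] /\
   inf [set htilde idx F theta H p.1 p.2 | p in Delta idx F theta H]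
     <= sup [set `|htilde idx F theta H p.1 p.2| | p in Delta idx F theta H] /\
   (forall p, Delta idx F theta H p -> `|htilde idx F theta H p.1 p.2| <= 1) /\
   sup [set `|htilde idx F theta H p.1 p.2| | p in Delta idx F theta H] <= 1 /\
   (forall y y' l, idx y = idx y' -> (l < ttau idx F theta H y)%N ->
      `|htilde idx F theta H y l - htilde idx F theta H y' l| <= dtheta idx F theta y y')).
Proof.
move=> /andP[theta_gt0 theta_lt1] H_gt0 C_ge1 H_lip inf_gt0.
have theta01 : 0 <= theta <= 1 by rewrite !ltW.
have C_ge0 : 0 <= C by lra.
have h_le1 := htilde_le1 theta01 H_gt0 C_ge0 H_lip.
have /set0P[_ [y0 _ _]] : range H != set0.
  by apply: contraTneq inf_gt0 => ->; rewrite inf0 ltxx.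
have Delta0 : Delta idx F theta H (y0, 0%N) by [].
have abs_h_bounded : has_sup [set `|htilde idx F theta H p.1 p.2| | p in Delta idx F theta H].
  by split; [exists `|htilde idx F theta H y0 0|, (y0, 0%N) | exists 1 => _ [p _ <-]].
split; first exact: sum_htilde.
split.
  have lb_gt0 : 0 < inf (range H) / ((1 + 2 * C) * inf (range H) + 1).
    have two_C_ge0 : 0 <= 1 + 2 * C by lra.
    by rewrite divr_gt0 //; have := mulr_ge0 two_C_ge0 (ltW inf_gt0); lra.
  apply: lt_le_trans lb_gt0 (lb_le_inf _ _); first by exists (htilde idx F theta H y0 0), (y0, 0%N).
  by move=> _ [p _ <-]; exact: htilde_ge.
split.
  have h_ge0 p : 0 <= htilde idx F theta H p.1 p.2 by exact/ltW/htilde_gt0.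
  apply: le_trans (inf_image_le h_ge0 Delta0) (le_trans (ler_norm _) _).
  by apply: sup_upper_bound => //; exists (y0, 0%N).
split; first by move=> p _.
split; first by apply: ge_sup; [case: abs_h_bounded | move=> _ [p _ <-]].
by move=> y y' l same_piece _; exact: (htilde_lip theta01 H_gt0 C_ge0 H_lip).
Qed.
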